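(* For $n \ge 2$ with $n \equiv 2 \pmod 6$, if $G \cong P_n$ and $v$ is an arbitrary vertex of $G$, then $\gamma_{\rm tg}(G|v) \le \gamma_{\rm tg}(G) - 1$.
   Context: Total domination game on a graph without isolated vertices: Dominator and Staller alternately choose vertices, each chosen vertex must be adjacent to some vertex not yet totally dominated; the game ends when no legal move exists; Dominator minimizes, Staller maximizes the number of moves; $\gamma_{\rm tg}(G)$ is the number of moves in the Dominator-start game under optimal play. $G|v$ is $G$ with $v$ declared already totally dominated, and $\gamma_{\rm tg}(G|v)$ is the corresponding optimal number of moves in the Dominator-start game. *)

From mathcomp Require Import all_boot.
Set Implicit Arguments. Unset Strict Implicit. Unset Printing Implicit Defensive.

Section TotalDominationGame.
Variables (T : finType) (e : rel T).

Definition nbhd (u : T) : {set T} := [set w | e u w].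

(* D = set of vertices already totally dominated.  A vertex u is a legal
   move iff it is adjacent to some vertex not yet totally dominated. *)
Definition legal (D : {set T}) (u : T) : bool := [exists w, e u w && (w \notin D)].

Definition legal_moves (D : {set T}) : seq T := [seq u <- enum T | legal D u].

(* Optimal number of remaining moves from position D with [dom] to move
   (true = Dominator, minimiser; false = Staller, maximiser).  [k] is fuel;
   each move strictly enlarges D, so fuel #|T|.+1 is always enough. *)
Fixpoint gval (k : nat) (dom : bool) (D : {set T}) : nat :=
  match k with
  | 0 => 0
  | k'.+1 =>
    let f u := (gval k' (~~ dom) (D :|: nbhd u)).+1 in
    match legal_moves D with
    | [::] => 0
    | u :: us => if dom then foldr (fun x m => minn (f x) m) (f u) us
                 else foldr (fun x m => maxn (f x) m) (f u) us
    end
  end.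

Definition gamma_tg : nat := gval #|T|.+1 true set0.

(* gamma_tg(G|v): Dominator-start game with v declared totally dominated. *)
Definition gamma_tg_at (v : T) : nat := gval #|T|.+1 true [set v].

End TotalDominationGame.

Definition path_rel (n : nat) : rel 'I_n :=
  fun i j => (i.+1 == j :> nat) || (j.+1 == i :> nat).

(* On the path 0, ..., 2m-1, playing u totally dominates u-1 and u+1, two
   consecutive vertices of the other parity.  Splitting the vertices by parity,
   a position is thus described by the runs of consecutive not yet dominated
   vertices in two paths of length m, and a move dominates one vertex at an end
   of a run or two adjacent vertices of a run (possibly splitting it).  With t
   the number of runs of length 2 mod 3, the game value of such a position is
   sum (2k+1)/3 + t/2 if Dominator is to move and sum (2k+1)/3 + (t+1)/2 if
   Staller is: no move changes this potential by more than one in favour of the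
   mover, and each player has a move attaining that bound.  For m = 1 mod 3
   this gives gamma_tg(P_2m) = 2(2m+1)/3 and, for every vertex v,
   gamma_tg(P_2m|v) = (2m+1)/3 + 2(m-1)/3. *)

From mathcomp Require Import all_boot zify.
Set Implicit Arguments. Unset Strict Implicit. Unset Printing Implicit Defensive.

Section FoldrMinMax.
Variables (S : eqType) (F : S -> nat) (u : S) (us : seq S).

Lemma foldr_minn_ge c :
  (forall x, x \in u :: us -> c <= F x) -> c <= foldr (fun x m => minn (F x) m) (F u) us.
Proof.
elim: us => [|y s IH] le_cF /=; first by rewrite le_cF ?mem_head.
rewrite leq_min le_cF ?inE ?eqxx ?orbT //; apply: IH => x; rewrite inE => /orP[/eqP->|xs].
  by rewrite le_cF ?mem_head.
by rewrite le_cF // !inE xs !orbT.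
Qed.

Lemma foldr_minn_le x :
  x \in u :: us -> foldr (fun x m => minn (F x) m) (F u) us <= F x.
Proof.
elim: us => [|y s IH]; first by rewrite inE => /eqP->.
rewrite /= geq_min !inE => /or3P[/eqP xu|/eqP->|xs]; last 2 first.
- by rewrite leqnn.
- by rewrite IH ?orbT // inE xs orbT.
by rewrite IH ?orbT // inE xu eqxx.
Qed.

Lemma foldr_maxn_le c :
  (forall x, x \in u :: us -> F x <= c) -> foldr (fun x m => maxn (F x) m) (F u) us <= c.
Proof.
elim: us => [|y s IH] le_Fc /=; first by rewrite le_Fc ?mem_head.
rewrite geq_max le_Fc ?inE ?eqxx ?orbT //; apply: IH => x; rewrite inE => /orP[/eqP->|xs].
  by rewrite le_Fc ?mem_head.
by rewrite le_Fc // !inE xs !orbT.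
Qed.

Lemma foldr_maxn_ge x :
  x \in u :: us -> F x <= foldr (fun x m => maxn (F x) m) (F u) us.
Proof.
elim: us => [|y s IH]; first by rewrite inE => /eqP->.
rewrite /= leq_max !inE => /or3P[/eqP xu|/eqP->|xs]; last 2 first.
- by rewrite leqnn.
- by rewrite IH ?orbT // inE xs orbT.
by rewrite IH ?orbT // inE xu eqxx.
Qed.

End FoldrMinMax.

Section GameValue.
Variables (T : finType) (e : rel T).

Lemma mem_legal_moves (D : {set T}) u : (u \in legal_moves e D) = legal e D u.
Proof. by rewrite mem_filter mem_enum andbT. Qed.

Lemma legal_proper (D : {set T}) u : legal e D u -> D \proper D :|: nbhd e u.
Proof.
case/existsP=> w /andP[euw wD]; apply: properUl; apply/subsetPn.
by exists w; rewrite // inE.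
Qed.

Lemma setU_nbhd_id (D : {set T}) u : ~~ legal e D u -> D :|: nbhd e u = D.
Proof.
move=> NL; apply/setUidPl/subsetP => w; rewrite inE => euw.
by apply: contraNT NL => wD; apply/existsP; exists w; rewrite euw.
Qed.

Lemma legal_moves_nil (D : {set T}) :
  (forall w, exists u, e u w) -> legal_moves e D = [::] -> D = setT.
Proof.
move=> adj nilD; apply/setP => w; rewrite inE; have [u euw] := adj w.
have := mem_legal_moves D u; rewrite nilD in_nil => /esym/negbT.
by apply: contraNT => wD; apply/existsP; exists w; rewrite euw.
Qed.

Variable P : bool -> {set T} -> nat.
Hypothesis no_isolated : forall w, exists u, e u w.
Hypothesis P_setT : forall dom, P dom setT = 0.
Hypothesis P_move : forall D u, legal e D u ->
  P true D <= (P false (D :|: nbhd e u)).+1 /\ (P true (D :|: nbhd e u)).+1 <= P false D.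
Hypothesis P_dominator : forall D : {set T}, D != setT ->
  exists2 u, legal e D u & (P false (D :|: nbhd e u)).+1 <= P true D.
Hypothesis P_staller : forall D : {set T}, D != setT ->
  exists2 u, legal e D u & P false D <= (P true (D :|: nbhd e u)).+1.

Lemma gval_potential k dom (D : {set T}) : #|T| < #|D| + k -> gval e k dom D = P dom D.
Proof.
elim: k dom D => [|k IH] dom D; first by rewrite addn0 ltnNge max_card.
move=> fuel /=; case Dmoves: (legal_moves e D) => [|u us].
  by rewrite (legal_moves_nil no_isolated Dmoves) P_setT.
have memD x : (x \in u :: us) = legal e D x by rewrite -Dmoves mem_legal_moves.
have DT : D != setT.
  apply: contraTneq (mem_head u us); rewrite memD => ->.
  by apply/existsPn => w; rewrite inE andbF.
have IHx x : legal e D x ->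
    gval e k (~~ dom) (D :|: nbhd e x) = P (~~ dom) (D :|: nbhd e x).
  by move=> Lx; apply: IH; move/proper_card: (legal_proper Lx); lia.
case: dom IHx => IHx /=; apply/eqP; rewrite eqn_leq; apply/andP; split.
- have [x Lx opt] := P_dominator DT.
  apply: leq_trans (foldr_minn_le _ (_ : x \in u :: us)) _; first by rewrite memD.
  by rewrite IHx.
- by apply: foldr_minn_ge => y; rewrite memD => Ly; rewrite IHx //; case: (P_move Ly).
- by apply: foldr_maxn_le => y; rewrite memD => Ly; rewrite IHx //; case: (P_move Ly).
- have [x Lx opt] := P_staller DT.
  apply: leq_trans _ (foldr_maxn_ge _ (_ : x \in u :: us)); last by rewrite memD.
  by rewrite IHx.
Qed.

Lemma gamma_tg_potential : gamma_tg e = P true set0.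
Proof. by apply: gval_potential; rewrite cards0. Qed.

Lemma gamma_tg_at_potential v : gamma_tg_at e v = P true [set v].
Proof. by apply: gval_potential; rewrite cards1. Qed.

End GameValue.

(* Lengths of the blocks of [false] between consecutive [true]s, empty blocks
   included; [k] counts the [false]s already read in the current block. *)
Fixpoint runs_from (k : nat) (l : seq bool) : seq nat :=
  match l with
  | [::] => [:: k]
  | true :: l' => k :: runs_from 0 l'
  | false :: l' => runs_from k.+1 l'
  end.

Definition runs := runs_from 0.

Lemma runs_from_add k l : runs_from k l = (k + head 0 (runs l)) :: behead (runs l).
Proof.
elim: l k => [|[] l IH] k; rewrite /runs /= ?addn0 //.
by rewrite [LHS]IH [runs_from 1 l]IH add1n addnS.
Qed.

Lemma runs_cons l : runs l = head 0 (runs l) :: behead (runs l).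
Proof. exact: runs_from_add 0 l. Qed.

Lemma runs_from_cat k A : exists rA a, runs_from k A = rcons rA a /\
  forall X, runs_from k (A ++ X) = rA ++ runs_from a X.
Proof.
elim: A k => [|[] A IH] k /=; first by exists [::], k.
  have [rA [a [-> catE]]] := IH 0.
  by exists (k :: rA), a; split => // X; rewrite catE.
exact: IH.
Qed.

Lemma runs_cat_true A X : runs (A ++ true :: X) = runs A ++ runs X.
Proof. by have [rA [a [rAE catE]]] := runs_from_cat 0 A; rewrite /runs catE rAE cat_rcons. Qed.

Lemma runs_true l : runs (true :: l) = 0 :: runs l.
Proof. by []. Qed.

Lemma runs_from_nseq j k l : runs_from j (nseq k false ++ l) = runs_from (j + k) l.
Proof. by elim: k j => [|k IH] j /=; rewrite ?addn0 ?IH ?addnS. Qed.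

Lemma runs_nseq k : runs (nseq k false) = [:: k].
Proof. by rewrite /runs -[nseq k false]cats0 runs_from_nseq. Qed.

Lemma runs_all0 l : all (pred1 0) (runs l) = all id l.
Proof. by elim: l => [|[] l IH] //; rewrite /runs /= runs_from_add. Qed.

(* Sets the entries of index [s.-1] and [s] of [l], when they exist. *)
Fixpoint mark (l : seq bool) (s : nat) : seq bool :=
  match l, s with
  | [::], _ => [::]
  | _ :: l', 0 => true :: l'
  | x :: l', s'.+1 => (x || (s' == 0)) :: mark l' s'
  end.

Lemma mark_oversize l s : size l < s -> mark l s = l.
Proof. by elim: l s => [|x l IH] [|[|s]] //= lt_ls; rewrite orbF IH. Qed.

Lemma mark_cat A X s : 0 < s -> mark (A ++ X) (size A + s) = A ++ mark X s.
Proof.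
move=> s_gt0; elim: A => //= x A IH.
by rewrite IH addn_eq0 (negbTE (lt0n_neq0 s_gt0)) andbF orbF.
Qed.

Lemma mark_cat_last A X : last true A -> mark (A ++ X) (size A) = A ++ mark X 0.
Proof.
case/lastP: A => [_ //|A x]; rewrite last_rcons => ->.
by rewrite size_rcons -addn1 !cat_rcons mark_cat.
Qed.

Lemma mark_catl Y B s : s < size Y -> mark (Y ++ B) s = mark Y s ++ B.
Proof. by elim: Y s => [|y Y IH] [|s] //= lt_sY; rewrite IH. Qed.

Lemma mark_cat_head Y B : head true B -> mark (Y ++ B) (size Y) = mark Y (size Y) ++ B.
Proof. by move=> hB; elim: Y => [|y Y /= ->] //; case: B hB => [|[]]. Qed.

Lemma mark_nseq_last k : mark (nseq k.+1 false) k.+1 = rcons (nseq k false) true.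
Proof. by elim: k => //= k ->. Qed.

Lemma mark_map (h : nat -> bool) k o s : mark [seq h t | t <- iota o k] s =
  [seq h t || (t.+1 == s + o) || (t == s + o) | t <- iota o k].
Proof.
elim: k o s => [|k IH] o [|s] //=.
- rewrite add0n eqxx orbT; congr (_ :: _); apply/eq_in_map => t.
  rewrite mem_iota => /andP[lt_ot _].
  by rewrite (gtn_eqF lt_ot) (gtn_eqF (ltnW lt_ot : o < t.+1)) !orbF.
- have -> : (o.+1 == s.+1 + o) = (s == 0) by apply/eqP/eqP; lia.
  have -> : (o == s.+1 + o) = false by apply/eqP; lia.
  by rewrite orbF IH addnS addSn.
Qed.

(* A move dominates [c] adjacent slots of a run, leaving runs [a] and [b] and
   [c.-1] empty runs; a single slot can only be taken at an end of the run. *)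
Definition run_cut (r r' : seq nat) : Prop := exists rA rB a b c,
  [/\ r = rA ++ (a + c + b) :: rB, r' = rA ++ a :: nseq c.-1 0 ++ b :: rB
    & c = 2 \/ c = 1 /\ (a = 0 \/ b = 0)].

Lemma run_cut_catl q r r' : run_cut r r' -> run_cut (q ++ r) (q ++ r').
Proof.
case=> rA [rB [a [b [c [-> -> cut]]]]].
by exists (q ++ rA), rB, a, b, c; split; rewrite // -!catA.
Qed.

Lemma run_cut_catr q r r' : run_cut r r' -> run_cut (r ++ q) (r' ++ q).
Proof.
case=> rA [rB [a [b [c [-> -> cut]]]]].
by exists rA, (rB ++ q), a, b, c; split; rewrite // -catA //= -catA.
Qed.

Lemma mark1_run_cut a X : mark X 1 != X -> run_cut (runs_from a X) (runs_from a (mark X 1)).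
Proof.
case: X => [|x [|y B]] //=.
  case: x => //= _; exists [::], [::], a, 0, 1.
  by rewrite addn0 addn1; split; auto.
have := runs_cons B; move: (head 0 _) (behead _) => h t runsB.
case: x; case: y; rewrite ?eqxx //= => _; rewrite !runs_from_add runsB /= !add0n.
- by exists [:: a], t, 0, h, 1; rewrite add0n; split; auto.
- by exists [::], (h :: t), a, 0, 1; rewrite addn0 addn1; split; auto.
- by exists [::], t, a, h, 2; rewrite addn2; split; auto.
Qed.

Lemma mark_run_cut l s : mark l s != l -> run_cut (runs l) (runs (mark l s)).
Proof.
case: s => [|s].
  case: l => [|[] B] //=; rewrite ?eqxx // => _.
  have := runs_cons B; move: (head 0 _) (behead _) => h t runsB.
  rewrite /runs /= runs_from_add -/(runs B) runsB.
  by exists [::], t, 0, h, 1; rewrite /= add0n; split; auto.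
case: (leqP s (size l)) => [le_sl|lt_ls]; last by rewrite mark_oversize ?eqxx //; apply: ltnW.
rewrite -(cat_take_drop s l); move: (take s l) (drop s l) (size_takel le_sl) => A X <-.
rewrite -addn1 mark_cat //; have [rA [a [_ catE]]] := runs_from_cat 0 A.
rewrite /runs !catE => marked; apply/run_cut_catl/mark1_run_cut.
by apply: contraNneq marked => ->.
Qed.

Lemma runs_from_split j l rA k rB : runs_from j l = rA ++ k :: rB ->
  exists A B, [/\ nseq j false ++ l = A ++ nseq k false ++ B, last true A, head true B
    & forall Y, runs (A ++ Y ++ B) = rA ++ runs Y ++ rB].
Proof.
elim: l j rA => [|[] l IH] j rA /=.
- case: rA => [|? [|]] //= [<- <-]; exists [::], [::].
  by split=> // *; rewrite !cats0.
- case: rA => [|r rA] /= [<-].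
    by move=> <-; exists [::], (true :: l); split=> // Y; rewrite runs_cat_true.
  move=> /(IH 0) [A [B [lE lastA headB runsE]]].
  exists (nseq j false ++ true :: A), B; split=> //.
  + by rewrite -[l]/(nseq 0 false ++ l) lE -catA.
  + by rewrite last_cat.
  + by move=> Y; rewrite -catA /= runs_cat_true runs_nseq runsE.
- move=> /IH [A [B [lE lastA headB runsE]]]; exists A, B; split=> //.
  by rewrite -lE -[false :: l]/(nseq 1 false ++ l) catA -nseqD addn1.
Qed.

Lemma runs_split l rA k rB : runs l = rA ++ k :: rB ->
  exists A B, [/\ l = A ++ nseq k false ++ B, last true A, head true B
    & forall Y, runs (A ++ Y ++ B) = rA ++ runs Y ++ rB].
Proof. exact: runs_from_split 0 l rA k rB. Qed.

Lemma mark_run_front l rA k rB : runs l = rA ++ k.+2 :: rB ->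
  exists2 s, 0 < s < size l & runs (mark l s) = rA ++ [:: 0, 0, k & rB].
Proof.
case/runs_split=> A [B [-> _ _ runsE]]; exists (size A + 1).
  by rewrite addn1 !size_cat size_nseq /=; lia.
by rewrite mark_cat // mark_catl ?size_nseq // runsE [mark _ 1]/= !runs_true runs_nseq.
Qed.

Lemma mark_run_right l rA k rB : runs l = rA ++ k.+1 :: rB ->
  exists2 s, 0 < s <= size l & runs (mark l s) = rA ++ [:: k, 0 & rB].
Proof.
case/runs_split=> A [B [-> _ headB runsE]]; exists (size A + k.+1).
  by rewrite !size_cat size_nseq; lia.
have := mark_cat_head (nseq k.+1 false) headB; rewrite size_nseq => markE.
by rewrite mark_cat // markE mark_nseq_last runsE -cats1 runs_cat_true runs_nseq.
Qed.

Lemma mark_run_left l rA k rB : runs l = rA ++ k.+1 :: rB ->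
  exists2 s, s < size l & runs (mark l s) = rA ++ [:: 0, k & rB].
Proof.
case/runs_split=> A [B [-> lastA _ runsE]]; exists (size A).
  by rewrite !size_cat size_nseq; lia.
by rewrite mark_cat_last // -[mark _ 0]/([:: true & nseq k false] ++ B) runsE runs_true runs_nseq.
Qed.

Lemma mark_run_end p l rA k rB : runs l = rA ++ k.+1 :: rB ->
  exists2 s, (~~ p <= s) && (s + p <= size l) & perm_eq (runs (mark l s)) (rA ++ [:: k, 0 & rB]).
Proof.
case: p => runsE.
  have [s lt_sl markE] := mark_run_left runsE; exists s; first by rewrite addn1 lt_sl.
  by rewrite markE perm_cat2l (perm_catCA [:: 0] [:: k]).
have [s /andP[s_gt0 le_sl] markE] := mark_run_right runsE.
by exists s; rewrite ?s_gt0 ?addn0 ?markE.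
Qed.

Lemma map_iota_const (S : Type) (P : nat -> S) b j k :
  (forall t, j <= t < j + k -> P t = b) -> [seq P t | t <- iota j k] = nseq k b.
Proof.
elim: k j => [|k IH] j Pb //=; rewrite Pb ?IH // ?leqnn ?addnS ?ltnS ?leq_addr //.
by move=> t /andP[lt_jt lt_tk]; apply: Pb; rewrite ltnW //= addnS.
Qed.

Lemma map_iota_eq i k :
  [seq t == i | t <- iota 0 (i + k.+1)] = nseq i false ++ true :: nseq k false.
Proof.
rewrite iotaD map_cat add0n /= eqxx; congr (_ ++ _ :: _); apply: map_iota_const => t /andP[].
  by rewrite add0n => _ /ltn_eqF.
by move=> /gtn_eqF.
Qed.

Definition cost k := (2 * k + 1) %/ 3.

(* The indicator of [k = 2 (mod 3)]. *)
Definition two_mod3 k := k.+1 %/ 3 - k %/ 3.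

Definition pot (r : seq nat) (dom : bool) :=
  sumn (map cost r) + (sumn (map two_mod3 r) + ~~ dom) %/ 2.

Lemma pot_cat r q dom : pot (r ++ q) dom =
  sumn (map cost r) + sumn (map cost q) +
  (sumn (map two_mod3 r) + sumn (map two_mod3 q) + ~~ dom) %/ 2.
Proof. by rewrite /pot !map_cat !sumn_cat. Qed.

Lemma pot_perm r q dom : perm_eq r q -> pot r dom = pot q dom.
Proof. by move=> rq; rewrite /pot !(perm_sumn (perm_map _ rq)). Qed.

Lemma pot_zeros r dom : all (pred1 0) r -> pot r dom = 0.
Proof. by move/all_pred1P->; rewrite /pot !map_nseq !sumn_nseq; case: dom. Qed.

Lemma pot_run_cut r r' : run_cut r r' ->
  pot r true <= (pot r' false).+1 /\ (pot r' true).+1 <= pot r false.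
Proof.
case=> rA [rB [a [b [c [-> -> cut]]]]].
have {cut} [-> | [-> ab0]] := cut; rewrite !pot_cat /= /cost /two_mod3; lia.
Qed.

Lemma sum_two_mod3_gt0 r : 0 < sumn (map two_mod3 r) -> exists2 k, k \in r & k %% 3 = 2.
Proof.
elim: r => [|k r IH] //=.
have [k2|k2] := eqVneq (k %% 3) 2; first by exists k; rewrite ?mem_head.
have -> : two_mod3 k = 0 by rewrite /two_mod3; lia.
by case/IH=> k' k'r k'2; exists k'; rewrite // inE k'r orbT.
Qed.

Section PathGame.
Variables (n m : nat) (T : finType) (e : rel T) (f : T -> 'I_n) (g : 'I_n -> T).
Hypotheses (n_double : n = m.*2) (fK : cancel f g) (gK : cancel g f)
  (path_e : forall x y, e x y = path_rel (f x) (f y)).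

Definition dom_at (D : {set T}) (j : nat) := [exists x in D, f x == j :> nat].

Definition dom_list D (p : bool) := [seq dom_at D (2 * t + p) | t <- iota 0 m].

Definition dom_runs D := runs (dom_list D false) ++ runs (dom_list D true).

Definition path_pot dom D := pot (dom_runs D) dom.

Lemma vertex_at j : j < n -> exists x, f x = j :> nat.
Proof. by move=> lt_jn; exists (g (Ordinal lt_jn)); rewrite gK. Qed.

Lemma dom_at_f D x : dom_at D (f x) = (x \in D).
Proof.
apply/existsP/idP => [[y /andP[yD /eqP/val_inj fyx]]|xD]; last by exists x; rewrite xD /=.
by rewrite -(can_inj fK fyx).
Qed.

Lemma dom_at_move D u j : j < n ->
  dom_at (D :|: nbhd e u) j = [|| dom_at D j, (f u).+1 == j | j.+1 == f u].
Proof.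
by case/vertex_at=> x <-; rewrite !dom_at_f !inE path_e.
Qed.

Lemma dom_list_move D u :
  dom_list (D :|: nbhd e u) (~~ odd (f u)) = mark (dom_list D (~~ odd (f u))) (f u).+1./2.
Proof.
rewrite /dom_list mark_map; apply/eq_in_map => t; rewrite mem_iota => /andP[_ lt_tm].
rewrite dom_at_move; last by lia.
rewrite addn0 -orbA; congr (_ || _).
by apply/idP/idP => /orP[] /eqP adj; apply/orP; lia.
Qed.

Lemma dom_list_move_other D u : dom_list (D :|: nbhd e u) (odd (f u)) = dom_list D (odd (f u)).
Proof.
apply/eq_in_map => t; rewrite mem_iota => /andP[_ lt_tm].
rewrite dom_at_move; last by lia.
have /negbTE-> : (f u).+1 != 2 * t + odd (f u) by apply/eqP; lia.
have /negbTE-> : (2 * t + odd (f u)).+1 != f u by apply/eqP; lia.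
by rewrite !orbF.
Qed.

Lemma size_dom_list D p : size (dom_list D p) = m.
Proof. by rewrite size_map size_iota. Qed.

Lemma dom_list_inj D1 D2 b :
  dom_list D1 b = dom_list D2 b -> dom_list D1 (~~ b) = dom_list D2 (~~ b) -> D1 = D2.
Proof.
move=> D12b D12nb; have D12 p : dom_list D1 p = dom_list D2 p by case: p b D12b D12nb => [] [].
apply/setP => x; rewrite -!dom_at_f.
have fxE : (f x : nat) = 2 * (f x)./2 + odd (f x) by lia.
have lt_xm : (f x)./2 < m by have := ltn_ord (f x); lia.
have := congr1 (nth false ^~ (f x)./2) (D12 (odd (f x))).
by rewrite !(nth_map 0) ?size_iota // nth_iota // add0n -fxE.
Qed.

Lemma dom_list_const D (p b : bool) :
  (forall t, t < m -> dom_at D (2 * t + p) = b) -> dom_list D p = nseq m b.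
Proof. by move=> Db; apply: map_iota_const => t /andP[_ lt_tm]; apply: Db. Qed.

Lemma dom_runs_perm D p : perm_eq (dom_runs D) (runs (dom_list D p) ++ runs (dom_list D (~~ p))).
Proof. by case: p; [apply/permPl; exact: perm_catC | exact: perm_refl]. Qed.

Lemma move_realizes_mark D p s : ~~ p <= s -> s + p <= m -> exists u,
  perm_eq (dom_runs (D :|: nbhd e u)) (runs (mark (dom_list D p) s) ++ runs (dom_list D (~~ p))).
Proof.
move=> le_ps le_spm; have [u fuE] : exists u, f u = 2 * s - ~~ p :> nat.
  by apply: vertex_at; lia.
have oddE : odd (f u) = ~~ p by rewrite fuE; case: p le_ps {le_spm fuE}; lia.
have sE : (f u).+1./2 = s by rewrite fuE; lia.
exists u; rewrite (permPl (dom_runs_perm _ p)) -oddE dom_list_move_other.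
by rewrite -[p]negbK -oddE dom_list_move sE.
Qed.

Lemma legal_of_dom_runs D u :
  size (dom_runs (D :|: nbhd e u)) != size (dom_runs D) -> legal e D u.
Proof. by apply: contraNT => /setU_nbhd_id ->; rewrite eqxx. Qed.

Lemma run_in_dom_list D k : k \in dom_runs D -> exists p rA rB, runs (dom_list D p) = rA ++ k :: rB.
Proof.
rewrite mem_cat => kD; have [p kp] : exists p, k \in runs (dom_list D p).
  by case/orP: kD; [exists false | exists true].
by exists p; case/splitPr: kp => rA rB; exists rA, rB.
Qed.

Lemma move_in_run D p s rA k rB ks : ~~ p <= s -> s + p <= m ->
  runs (dom_list D p) = rA ++ k :: rB -> perm_eq (runs (mark (dom_list D p) s)) (rA ++ ks ++ rB) ->
  size ks != 1 -> exists u r, [/\ legal e D u, perm_eq (dom_runs D) (k :: r)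
    & perm_eq (dom_runs (D :|: nbhd e u)) (ks ++ r)].
Proof.
move=> le_ps le_spm runsE markE ks1; have [u uE] := move_realizes_mark D le_ps le_spm.
set r := rA ++ rB ++ runs (dom_list D (~~ p)).
have DE : perm_eq (dom_runs D) (k :: r).
  by rewrite (permPl (dom_runs_perm D p)) runsE -catA (perm_catCA rA [:: k]).
have D'E : perm_eq (dom_runs (D :|: nbhd e u)) (ks ++ r).
  rewrite (permPl uE) (permPl (perm_cat markE (perm_refl _))) -!catA.
  by rewrite (perm_catCA rA ks).
exists u, r; split=> //; apply: legal_of_dom_runs.
by rewrite (perm_size DE) (perm_size D'E) size_cat /= -add1n eqn_add2r.
Qed.

Lemma move_front D j : j.+2 \in dom_runs D -> exists u r, [/\ legal e D u,
  perm_eq (dom_runs D) (j.+2 :: r) & forall dom, path_pot dom (D :|: nbhd e u) = pot (j :: r) dom].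
Proof.
case/run_in_dom_list=> p [rA [rB runsE]].
have [s /andP[s_gt0 lt_sm] markE] := mark_run_front runsE; rewrite size_dom_list in lt_sm.
have [le_ps le_spm] : ~~ p <= s /\ s + p <= m by split; lia.
have markP : perm_eq (runs (mark (dom_list D p) s)) (rA ++ [:: 0; 0; j] ++ rB).
  by rewrite markE perm_refl.
have [u [r [Lu DE D'E]]] := move_in_run le_ps le_spm runsE markP isT.
by exists u, r; split=> // dom; rewrite /path_pot (pot_perm _ D'E) /pot /=.
Qed.

Lemma move_end D j : j.+1 \in dom_runs D -> exists u r, [/\ legal e D u,
  perm_eq (dom_runs D) (j.+1 :: r) & forall dom, path_pot dom (D :|: nbhd e u) = pot (j :: r) dom].
Proof.
case/run_in_dom_list=> p [rA [rB runsE]].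
have [s /andP[le_ps le_spm] markE] := mark_run_end p runsE; rewrite size_dom_list in le_spm.
have [u [r [Lu DE D'E]]] := move_in_run (ks := [:: j; 0]) le_ps le_spm runsE markE isT.
by exists u, r; split=> // dom; rewrite /path_pot (pot_perm _ D'E) /pot /=.
Qed.

Lemma path_pot_setT dom : path_pot dom setT = 0.
Proof.
have dom_listT p : dom_list setT p = nseq m true.
  apply: dom_list_const => t lt_tm; have [x fxE] : exists x, f x = 2 * t + p :> nat.
    by apply: vertex_at; lia.
  by rewrite -fxE dom_at_f inE.
by apply: pot_zeros; rewrite all_cat !runs_all0 !dom_listT all_nseq orbT.
Qed.

Lemma dom_runs_pos D : D != setT -> exists j, j.+1 \in dom_runs D.
Proof.
rewrite eqEsubset subsetT /= => /subsetPn[x _ xD].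
have lt_xm : (f x)./2 < m by have := ltn_ord (f x); lia.
have : ~~ all id (dom_list D (odd (f x))).
  apply/negP => /(all_nthP false)/(_ (f x)./2); rewrite size_dom_list => /(_ lt_xm).
  rewrite (nth_map 0) ?size_iota // nth_iota // add0n.
  by rewrite (_ : _ + _ = f x) ?dom_at_f ?(negbTE xD) //; lia.
rewrite -runs_all0 => /allPn[[|j] // jx _]; exists j.
by rewrite mem_cat; case: (odd (f x)) jx => ->; rewrite ?orbT.
Qed.

Lemma dom_runs_move D u : legal e D u -> run_cut (dom_runs D) (dom_runs (D :|: nbhd e u)).
Proof.
move=> Lu; have changed : mark (dom_list D (~~ odd (f u))) (f u).+1./2 != dom_list D (~~ odd (f u)).
  rewrite -dom_list_move; apply: contraTneq (legal_proper Lu) => same.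
  by rewrite (dom_list_inj same) ?properxx // negbK dom_list_move_other.
have := mark_run_cut changed; rewrite -dom_list_move /dom_runs.
case: (odd (f u)) (dom_list_move_other D u) => /= -> cut; first exact: run_cut_catr.
exact: run_cut_catl.
Qed.

Lemma path_pot_move D u : legal e D u ->
  path_pot true D <= (path_pot false (D :|: nbhd e u)).+1 /\
  (path_pot true (D :|: nbhd e u)).+1 <= path_pot false D.
Proof. by move/dom_runs_move/pot_run_cut. Qed.

Lemma path_pot_dominator D : D != setT ->
  exists2 u, legal e D u & (path_pot false (D :|: nbhd e u)).+1 <= path_pot true D.
Proof.
move=> DT; have [j jD] := dom_runs_pos DT.
case: (boolP (odd (sumn (map two_mod3 (dom_runs D))))) => parity.
  have [k kD k2] := sum_two_mod3_gt0 (odd_gt0 parity).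
  have [k' kE] : exists k', k = k'.+2 by exists (k - 2); lia.
  rewrite {}kE in kD k2; have [u [r [Lu DE D'E]]] := move_front kD.
  exists u => //; move: parity k2; rewrite D'E /path_pot (pot_perm _ DE).
  by rewrite (perm_sumn (perm_map _ DE)) /pot /= /cost /two_mod3; lia.
have [j1|j1] := eqVneq (j %% 3) 0.
  have [u [r [Lu DE D'E]]] := move_end jD.
  exists u => //; move: parity j1; rewrite D'E /path_pot (pot_perm _ DE).
  by rewrite (perm_sumn (perm_map _ DE)) /pot /= /cost /two_mod3; lia.
have [j' jE] : exists j', j = j'.+1 by exists j.-1; lia.
rewrite {}jE in jD j1; have [u [r [Lu DE D'E]]] := move_front jD.
exists u => //; move: parity j1; rewrite D'E /path_pot (pot_perm _ DE).
by rewrite (perm_sumn (perm_map _ DE)) /pot /= /cost /two_mod3; lia.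
Qed.

Lemma path_pot_staller D : D != setT ->
  exists2 u, legal e D u & path_pot false D <= (path_pot true (D :|: nbhd e u)).+1.
Proof.
move=> DT; case: (posnP (sumn (map two_mod3 (dom_runs D)))) => [no_two|has_two].
  have [j jD] := dom_runs_pos DT; have [u [r [Lu DE D'E]]] := move_end jD.
  exists u => //; move: no_two; rewrite D'E /path_pot (pot_perm _ DE).
  by rewrite (perm_sumn (perm_map _ DE)) /pot /= /cost /two_mod3; lia.
have [[|k] kD k2] := sum_two_mod3_gt0 has_two => //; have [u [r [Lu DE D'E]]] := move_end kD.
exists u => //; move: k2; rewrite D'E /path_pot (pot_perm _ DE).
by rewrite /pot /= /cost /two_mod3; lia.
Qed.

Lemma path_no_isolated : 0 < m -> forall w, exists u, e u w.
Proof.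
move=> m_gt0 w; have lt_wn := ltn_ord (f w); have [lt_Swn|ge_Swn] := ltnP (f w).+1 n.
  by have [u fuE] := vertex_at lt_Swn; exists u; rewrite path_e /path_rel fuE eqxx orbT.
have [u fuE] : exists u, f u = (f w).-1 :> nat by apply: vertex_at; lia.
by exists u; rewrite path_e /path_rel fuE; apply/orP; left; apply/eqP; lia.
Qed.

Lemma path_pot_set0 dom : path_pot dom set0 = pot [:: m; m] dom.
Proof.
have dom_list0 p : dom_list set0 p = nseq m false.
  by apply: dom_list_const => t _; apply/existsP => [[x]]; rewrite inE.
by rewrite /path_pot /dom_runs !dom_list0 runs_nseq.
Qed.

Lemma dom_at_set1 v j : dom_at [set v] j = (f v == j :> nat).
Proof.
apply/existsP/idP => [[x /andP[/set1P-> //]]|fvj].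
by exists v; rewrite inE eqxx.
Qed.

Lemma path_pot_set1 v :
  exists2 i, i < m & forall dom, path_pot dom [set v] = pot [:: m; i; m - i.+1] dom.
Proof.
have lt_vm : (f v)./2 < m by have := ltn_ord (f v); lia.
exists (f v)./2 => // dom.
have other : dom_list [set v] (~~ odd (f v)) = nseq m false.
  by apply: dom_list_const => t _; rewrite dom_at_set1; apply/eqP; lia.
have own : dom_list [set v] (odd (f v)) =
    nseq (f v)./2 false ++ true :: nseq (m - ((f v)./2).+1) false.
  rewrite -map_iota_eq subnSK // subnKC 1?ltnW //; apply/eq_map => t.
  by rewrite dom_at_set1; apply/eqP/eqP; lia.
rewrite /path_pot (pot_perm _ (dom_runs_perm _ (~~ odd (f v)))) other negbK own.
by rewrite runs_cat_true !runs_nseq.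
Qed.

Lemma gamma_tg_path : 0 < m -> gamma_tg e = path_pot true set0.
Proof.
move=> m_gt0; exact: (gamma_tg_potential (path_no_isolated m_gt0) path_pot_setT
  path_pot_move path_pot_dominator path_pot_staller).
Qed.

Lemma gamma_tg_at_path v : 0 < m -> gamma_tg_at e v = path_pot true [set v].
Proof.
move=> m_gt0; exact: (gamma_tg_at_potential (path_no_isolated m_gt0) path_pot_setT
  path_pot_move path_pot_dominator path_pot_staller v).
Qed.

End PathGame.

Theorem lemma3p5 (n : nat) (T : finType) (e : rel T) (f : T -> 'I_n) :
  2 <= n -> n %% 6 = 2 ->
  bijective f -> (forall x y : T, e x y = @path_rel n (f x) (f y)) ->
  forall v : T, gamma_tg_at e v <= gamma_tg e - 1.
Proof.
move=> n_ge2 n_mod6 [g fK gK] path_e v.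
have n_double : n = (n./2).*2 by lia.
have m_gt0 : 0 < n./2 by lia.
rewrite (gamma_tg_path n_double fK gK path_e m_gt0).
rewrite (gamma_tg_at_path n_double fK gK path_e v m_gt0).
have [i lt_im ->] := path_pot_set1 f n_double v.
by rewrite path_pot_set0 /pot /= /cost /two_mod3; lia.
Qed.
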